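(* Let $\hslash\in\mathbb{R}$ and let $a\in A_\hslash^\infty$. Then the commutator \[\left[\begin{bmatrix}\pi_\hslash(a)&0\\0&\pi_\hslash(a)\end{bmatrix},\ D\right],\qquad D=\begin{bmatrix}0&x-\frac{d}{dx}\\ x+\frac{d}{dx}&0\end{bmatrix},\] defined on $\mathcal{S}(\mathbb{R})\oplus\mathcal{S}(\mathbb{R})$, extends to a bounded operator on $L^2(\mathbb{R})\oplus L^2(\mathbb{R})$.
   Context: $\mathbb{T}=\mathbb{R}/\mathbb{Z}$. For $\hslash\in\mathbb{R}$, $A_\hslash=C(\mathbb{T})\rtimes_\hslash\mathbb{Z}$ is the crossed product C*-algebra for the action of $\mathbb{Z}$ on $\mathbb{T}$ generated by translation by $\hslash$ mod $\mathbb{Z}$; it is generated by unitaries $U$ (the function $U(t)=e^{2\pi i t}$) and $V$ (the generator of $\mathbb{Z}$), with $UV=e^{-2\pi i\hslash}VU$. The Schwartz subalgebra is $A_\hslash^\infty=\{\sum_{n,m}a_{nm}U^nV^m:\ \sum|a_{nm}|(1+n^2+m^2)^k<\infty\ \forall k\}$. The representation $\pi_\hslash:A_\hslash\to\mathbb{B}(L^2(\mathbb{R}))$ lets $f\in C(\mathbb{T})$ act as multiplication by $f$ regarded as a $1$-periodic function on $\mathbb{R}$, and $V$ act by $(V\xi)(x)=\xi(x-\hslash)$. $\mathcal{S}(\mathbb{R})$ is the Schwartz space; $x$ denotes the multiplication operator by the coordinate. *)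

From HB Require Import structures.
From mathcomp Require Import all_boot all_order all_algebra.
From mathcomp Require Import all_classical all_reals all_analysis.
From mathcomp Require Import complex.
Set Implicit Arguments. Unset Strict Implicit. Unset Printing Implicit Defensive.
Import Order.TTheory GRing.Theory Num.Theory.
Import numFieldNormedType.Exports.
Local Open Scope classical_set_scope.
Local Open Scope ring_scope.
Local Open Scope complex_scope.

Section Defs.
Variable R : realType.

Definition smooth_real (f : R -> R) : Prop :=
  forall (n : nat) (x : R), derivable (derive1n n f) x 1.

Definition schwartz_real (f : R -> R) : Prop :=
  smooth_real f /\
  forall k l : nat, exists M : R, forall x : R, `| x ^+ k * derive1n l f x | <= M.

Definition schwartz (xi : R -> R[i]) : Prop :=
  schwartz_real (fun x => complex.Re (xi x)) /\ schwartz_real (fun x => complex.Im (xi x)).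

Definition cderiv (xi : R -> R[i]) : R -> R[i] :=
  fun x => (derive1 (fun y => complex.Re (xi y)) x) +i* (derive1 (fun y => complex.Im (xi y)) x).

Definition cmulx (xi : R -> R[i]) : R -> R[i] := fun x => x%:C * xi x.

Definition opMinus (xi : R -> R[i]) : R -> R[i] := fun x => cmulx xi x - cderiv xi x.
Definition opPlus (xi : R -> R[i]) : R -> R[i] := fun x => cmulx xi x + cderiv xi x.

Definition climn (u : nat -> R[i]) : R[i] :=
  (limn (fun N => complex.Re (u N))) +i* (limn (fun N => complex.Im (u N))).

Definition expi (t : R) : R[i] := (cos t) +i* (sin t).

Definition zsq (N : nat) (F : int -> int -> R[i]) : R[i] :=
  \sum_(i < (2 * N).+1) \sum_(j < (2 * N).+1) F (i%:Z - N%:Z) (j%:Z - N%:Z).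

Definition cabs (z : R[i]) : R :=
  Num.sqrt (complex.Re z ^+ 2 + complex.Im z ^+ 2).

(* Schwartz (rapidly decreasing) coefficient sequences: a = sum a_nm U^n V^m
   lies in A_hbar^infty *)
Definition rapid_coeff (a : int -> int -> R[i]) : Prop :=
  forall k : nat,
    (\esum_(p in [set: int * int])
       ((cabs (a p.1 p.2)) * (1 + (p.1)%:~R ^+ 2 + (p.2)%:~R ^+ 2) ^+ k)%:E
     < +oo)%E.

(* pi_hbar(a) xi, for a = sum a_nm U^n V^m:
   (pi(a) xi)(x) = sum_{n,m} a_nm e^{2 pi i n x} xi(x - m hbar)
   (U acts by multiplication by e^{2 pi i x}, V by translation by hbar) *)
Definition piA (h : R) (a : int -> int -> R[i]) (xi : R -> R[i]) : R -> R[i] :=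
  fun x => climn (fun N => zsq N (fun n m =>
     a n m * expi (2 * pi * n%:~R * x) * xi (x - m%:~R * h))).

Definition L2sq (f : R -> R[i]) : \bar R :=
  (\int[lebesgue_measure]_(x in [set: R]) ((complex.Re (f x)) ^+ 2 + (complex.Im (f x)) ^+ 2)%:E)%E.

End Defs.

(* Write a = sum a_nm U^n V^m.  As U^n multiplies by e^{2 pi i n x} and V^m
   translates by m hbar, commuting pi(a) past x + s d/dx (s = -1 or 1) gives,
   term by term,
     (pi(a) (x + s d/dx) - (x + s d/dx) pi(a)) xi (x)
       = sum_nm a_nm e^{2 pi i n x} xi(x - m hbar) (- m hbar - 2 pi i s n),
   an operator of the same shape whose coefficients are dominated by
   (|hbar| + 2 pi) |a_nm| (1 + n^2 + m^2), a summable family since a is rapidly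
   decreasing.  Such a series of modulated translates is bounded on L^2 by the
   l^1 norm of its coefficients: Cauchy-Schwarz with these weights, translation
   invariance of Lebesgue measure, and Fatou's lemma to pass from the square
   partial sums to the limit.  Differentiating pi(a) xi term by term is legitimate
   because xi and xi' are bounded, so the differentiated series converges
   uniformly. *)

From HB Require Import structures.
From mathcomp Require Import all_boot all_order all_algebra.
From mathcomp Require Import all_classical all_reals all_analysis.
From mathcomp Require Import measurable_realfun complex.
From mathcomp Require Import ring lra zify.
Import Order.TTheory GRing.Theory Num.Theory.
Import numFieldNormedType.Exports.
Local Open Scope classical_set_scope.
Local Open Scope ring_scope.
Local Open Scope complex_scope.
Set Implicit Arguments. Unset Strict Implicit. Unset Printing Implicit Defensive.

Section RealAnalysis.
Variable R : realType.

Lemma cvgn_cauchy_rate (u c : nat -> R) :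
  (forall N M, (N <= M)%N -> `|u M - u N| <= c N) -> c @ \oo --> (0:R) ->
  cvgn u /\ forall N, `|limn u - u N| <= c N.
Proof.
move=> hu hc.
have cu : cvgn u.
  apply: cauchy_cvg; apply/cauchy_exP => e e0.
  have /cvgrPdist_lt /(_ e e0) [N _ HN] := hc.
  exists (u N); exists N => // n /= Nn.
  rewrite /ball /= distrC; apply: le_lt_trans (hu _ _ Nn) _.
  by have := HN N (leqnn N); rewrite sub0r normrN; apply: le_lt_trans; apply: ler_norm.
split => // N.
have lim_dist : (fun M => `|u M - u N|) @ \oo --> `|limn u - u N|.
  by apply: cvg_norm; apply: cvgB => //; apply: cvg_cst.
rewrite -(cvg_lim _ lim_dist) //.
apply: limr_le; first by apply/cvg_ex; eexists; exact: lim_dist.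
by exists N => // M /= NM; apply: hu.
Qed.

Lemma ler_dist_bounded_derive (f df : R -> R) (B : R) :
  (forall y : R, is_derive y 1 f (df y)) -> (forall y, `|df y| <= B) ->
  forall a b, `|f b - f a| <= B * `|b - a|.
Proof.
move=> fdf dfB a b.
wlog ab : a b / a <= b.
  move=> H; case: (leP a b) => [/H//|/ltW /H].
  by rewrite distrC [`|a - b|]distrC.
have [c _ ->] : exists2 c, c \in `[a, b] & f b - f a = df c * (b - a).
  apply: (MVT_segment ab); apply: derivable_within_continuous => x _.
  by have [] := fdf x.
by rewrite normrM ler_wpM2r.
Qed.

Section UniformLimitOfDerivatives.
Variables (F DF : nat -> R -> R) (f g : R -> R) (e : nat -> R).
Hypothesis F_derive : forall N (y : R), is_derive y 1 (F N) (DF N y).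
Hypothesis F_cvg : forall y, (fun N => F N y) @ \oo --> f y.
Hypothesis DF_unif : forall N y, `|g y - DF N y| <= e N.
Hypothesis e_cvg0 : e @ \oo --> (0:R).

Lemma ler_dist_limit_remainder N a b :
  `|(f b - F N b) - (f a - F N a)| <= e N * `|b - a|.
Proof.
have step M : `|(F M b - F N b) - (F M a - F N a)| <= (e M + e N) * `|b - a|.
  apply: (@ler_dist_bounded_derive (fun y => F M y - F N y) (fun y => DF M y - DF N y)).
  by move=> y; apply: (le_trans (ler_distD (g y) _ _)); rewrite distrC lerD.
have hL : (fun M => `|(F M b - F N b) - (F M a - F N a)|) @ \oo -->
           `|(f b - F N b) - (f a - F N a)|.
  by apply: cvg_norm; apply: cvgB; apply: cvgB => //; exact: cvg_cst.
have hR : (fun M => (e M + e N) * `|b - a|) @ \oo --> (0 + e N) * `|b - a|.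
  by apply: cvgMl; apply: cvgD => //; exact: cvg_cst.
rewrite -(cvg_lim _ hL) // -[e N]add0r -(cvg_lim _ hR) //.
by apply: ler_lim; [exact: cvgP hL|exact: cvgP hR|exact: nearW].
Qed.

Lemma is_derive_unif_limit (x : R) : is_derive x 1 f (g x).
Proof.
have quotient_cvg :
    (fun h : R => h^-1 *: ((f \o shift x) (h *: 1) - f x)) @ 0^' --> g x.
  apply/cvgrPdist_le => eps eps0.
  have eps30 : 0 < eps / 3 by rewrite divr_gt0.
  have /cvgrPdist_le /(_ (eps/3) eps30) [N _ HN] := e_cvg0.
  have eN : e N <= eps / 3.
    by apply: le_trans (HN N (leqnn N)); rewrite sub0r normrN ler_norm.
  have [dFN1 dFN2] := F_derive N x.
  have /cvgrPdist_le /(_ (eps/3) eps30) hN :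
      (fun h : R => h^-1 *: ((F N \o shift x) (h *: 1) - F N x)) @ 0^' --> DF N x.
    by rewrite -dFN2; exact: dFN1.
  near=> h.
  have hn0 : h != 0 by near: h; exact: nbhs_dnbhs_neq.
  have e2 : `|DF N x - h^-1 *: ((F N \o shift x) h%:A - F N x)| <= eps / 3.
    by near: h; exact: hN.
  set QN := h^-1 *: ((F N \o shift x) h%:A - F N x) in e2 *.
  set Qf := h^-1 *: ((f \o shift x) h%:A - f x).
  have e1 : `|g x - DF N x| <= eps / 3 := le_trans (DF_unif N x) eN.
  have e3 : `|QN - Qf| <= eps / 3.
    rewrite -scalerBr normrZ normfV /=.
    have := ler_dist_limit_remainder N x (h%:A + x); rewrite addrK.
    have -> : F N (h%:A + x) - F N x - (f (h%:A + x) - f x) =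
              - (f (h%:A + x) - F N (h%:A + x) - (f x - F N x)) by ring.
    rewrite normrN => lip; apply: le_trans eN.
    rewrite ler_pdivrMl ?normr_gt0 //.
    by apply: (le_trans lip); rewrite mulrC normrZ normr1 mulr1.
  have -> : g x - Qf = (g x - DF N x) + (DF N x - QN) + (QN - Qf) by ring.
  apply: (le_trans (ler_normD _ _)); apply: (le_trans (lerD (ler_normD _ _) (lexx _))).
  have -> : eps = eps / 3 + eps / 3 + eps / 3 :> R by field.
  by rewrite !lerD.
apply: DeriveDef; first exact: cvgP quotient_cvg.
exact: cvg_lim quotient_cvg.
Unshelve. all: by end_near. Qed.

End UniformLimitOfDerivatives.

Lemma cauchy_schwarz_step (A P Q v : R) : 0 <= P -> 0 <= Q -> A ^+ 2 <= P * Q ->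
  2 * v * A <= Q + P * v ^+ 2.
Proof.
move=> P0 Q0 hA; have [P_eq0|Pn0] := eqVneq P 0.
  rewrite P_eq0 mul0r in hA.
  have /eqP -> : A == 0 by rewrite -sqrf_eq0 eq_le hA sqr_ge0.
  by rewrite P_eq0 mulr0 mul0r addr0.
have Pgt0 : 0 < P by rewrite lt_def Pn0 P0.
rewrite -(ler_pM2l Pgt0); have := sqr_ge0 (P * v - A); nra.
Qed.

Lemma cauchy_schwarz_weighted (I : Type) (s : seq I) (c v : I -> R) :
  (forall i, 0 <= c i) ->
  (\sum_(i <- s) c i * v i) ^+ 2 <= (\sum_(i <- s) c i) * (\sum_(i <- s) c i * v i ^+ 2).
Proof.
move=> c0; elim: s => [|i s IH]; first by rewrite !big_nil expr0n /= mul0r.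
rewrite !big_cons.
set A := \sum_(j <- s) c j * v j in IH *.
set P := \sum_(j <- s) c j in IH *.
set Q := \sum_(j <- s) c j * v j ^+ 2 in IH *.
have P0 : 0 <= P by apply: sumr_ge0.
have Q0 : 0 <= Q by apply: sumr_ge0 => j _; rewrite mulr_ge0 // sqr_ge0.
have := cauchy_schwarz_step (v i) P0 Q0 IH; have := c0 i; nra.
Qed.

Lemma ge0_integral_shift (G : R -> R) (c : R) : continuous G -> (forall x, 0 <= G x) ->
  (\int[lebesgue_measure]_(x in [set: R]) (G (x - c))%:E =
   \int[lebesgue_measure]_(x in [set: R]) (G x)%:E)%E.
Proof.
move=> cG G0.
have dF : (fun y : R => y - c)^`()%classic = cst 1.
  apply/funext => x; rewrite derive1E; apply: derive_val.
  by apply: is_derive_eq; rewrite /GRing.scale /=; ring.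
rewrite (@increasing_ge0_integration_by_substitutionT _ (fun y => y - c) G) //.
- by rewrite dF; apply: eq_integral => x _ /=; rewrite mulr1.
- by move=> x y xy; rewrite ltrD2r.
- by rewrite dF; exact: cst_continuous.
- by rewrite dF; exact: is_cvg_cst.
- by rewrite dF; exact: is_cvg_cst.
- exact: cvg_addrr_Ny.
- exact: cvg_addrr.
Qed.

End RealAnalysis.

Definition zrange (N : nat) : seq int := [seq i%:Z - N%:Z | i <- iota 0 (2 * N).+1].
Definition zsquare (N : nat) : seq (int * int) := [seq (n, m) | n <- zrange N, m <- zrange N].

Lemma zsqE (R : realType) N (F : int -> int -> R[i]) :
  zsq N F = \sum_(p <- zsquare N) F p.1 p.2.
Proof.
rewrite /zsq /zsquare big_allpairs /zrange big_map.
rewrite -(big_mkord xpredT (fun i => \sum_(j < (2 * N).+1) F (i%:Z - N%:Z) (j%:Z - N%:Z))).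
rewrite /index_iota subn0; apply: eq_bigr => i _.
by rewrite big_map -(big_mkord xpredT (fun j => F (i%:Z - N%:Z) (j%:Z - N%:Z))) /index_iota subn0.
Qed.

Lemma mem_zrange N n : (n \in zrange N) = (`|n|%N <= N)%N.
Proof.
apply/mapP/idP => [[k]|nN]; first by rewrite mem_iota => /andP [_ kN] ->; lia.
by exists (absz (n + N%:Z)); [rewrite mem_iota|]; lia.
Qed.

Lemma uniq_zrange N : uniq (zrange N).
Proof. by rewrite map_inj_uniq ?iota_uniq // => i j; lia. Qed.

Lemma mem_zsquare N p : (p \in zsquare N) = (`|p.1|%N <= N)%N && (`|p.2|%N <= N)%N.
Proof.
case: p => n m /=; apply/allpairsP/andP => [[[n' m'] /= [+ + [-> ->]]]|[nN mN]].
  by rewrite -!mem_zrange.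
by exists (n, m); rewrite /= !mem_zrange.
Qed.

Lemma uniq_zsquare N : uniq (zsquare N).
Proof. by apply: allpairs_uniq; try exact: uniq_zrange; move=> [a b] [c d] _ _ /= [-> ->]. Qed.

Lemma big_zsquare_split (V : zmodType) N M (G : int * int -> V) : (N <= M)%N ->
  \sum_(p <- zsquare M) G p =
  \sum_(p <- zsquare N) G p + \sum_(p <- zsquare M | p \notin zsquare N) G p.
Proof.
move=> NM; rewrite (bigID (mem (zsquare N))) /=; congr (_ + _).
rewrite -big_filter; apply: perm_big; apply: uniq_perm.
- exact/filter_uniq/uniq_zsquare.
- exact: uniq_zsquare.
move=> p; rewrite mem_filter; apply/andP/idP => [[]//|pN]; split => //.
by move: pN; rewrite !mem_zsquare => /andP [? ?]; apply/andP; split; lia.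
Qed.

Section ComplexFunctions.
Variable R : realType.
Notation C := R[i].

Lemma Re_mul (x y : C) :
  complex.Re (x * y) = complex.Re x * complex.Re y - complex.Im x * complex.Im y.
Proof. by case: x; case: y. Qed.

Lemma Im_mul (x y : C) :
  complex.Im (x * y) = complex.Re x * complex.Im y + complex.Im x * complex.Re y.
Proof. by case: x => a b; case: y => c d /=; ring. Qed.

Lemma Re_realM (c : R) (z : C) : complex.Re (c%:C * z) = c * complex.Re z.
Proof. by case: z => a b /=; ring. Qed.

Lemma Im_realM (c : R) (z : C) : complex.Im (c%:C * z) = c * complex.Im z.
Proof. by case: z => a b /=; ring. Qed.

Definition ccvgn (u : nat -> C) (z : C) :=
  (fun N => complex.Re (u N)) @ \oo --> complex.Re z /\
  (fun N => complex.Im (u N)) @ \oo --> complex.Im z.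

Lemma ccvgn_climn u z : ccvgn u z -> climn u = z.
Proof. by case: z => r s [ur us]; rewrite /climn (cvg_lim _ ur) // (cvg_lim _ us). Qed.

Lemma ccvgnD u v x y : ccvgn u x -> ccvgn v y -> ccvgn (u \+ v) (x + y).
Proof.
move=> [ux1 ux2] [vy1 vy2]; split.
  by under eq_fun do rewrite raddfD; rewrite raddfD; apply: cvgD.
by under eq_fun do rewrite raddfD; rewrite raddfD; apply: cvgD.
Qed.

Lemma ccvgnB u v x y : ccvgn u x -> ccvgn v y -> ccvgn (u \- v) (x - y).
Proof.
move=> [ux1 ux2] [vy1 vy2]; split.
  by under eq_fun do rewrite raddfB; rewrite raddfB; apply: cvgB.
by under eq_fun do rewrite raddfB; rewrite raddfB; apply: cvgB.
Qed.

Lemma ccvgn_realM (c : R) u x : ccvgn u x -> ccvgn (fun N => c%:C * u N) (c%:C * x).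
Proof.
move=> [ux1 ux2]; split.
  by under eq_fun do rewrite Re_realM; rewrite Re_realM; apply: cvgMr.
by under eq_fun do rewrite Im_realM; rewrite Im_realM; apply: cvgMr.
Qed.

Lemma cabs_ge0 (z : C) : 0 <= cabs z. Proof. exact: sqrtr_ge0. Qed.

Lemma cabs_sqr (z : C) : cabs z ^+ 2 = complex.Re z ^+ 2 + complex.Im z ^+ 2.
Proof. by rewrite /cabs sqr_sqrtr // addr_ge0 // sqr_ge0. Qed.

Lemma abs_Re_le_cabs (z : C) : `|complex.Re z| <= cabs z.
Proof.
rewrite /cabs -(sqrtr_sqr (complex.Re z)) ler_sqrt ?addr_ge0 ?sqr_ge0 //.
by rewrite lerDl sqr_ge0.
Qed.

Lemma abs_Im_le_cabs (z : C) : `|complex.Im z| <= cabs z.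
Proof.
rewrite /cabs -(sqrtr_sqr (complex.Im z)) ler_sqrt ?addr_ge0 ?sqr_ge0 //.
by rewrite lerDr sqr_ge0.
Qed.

Lemma cabs_le_abs_ReIm (z : C) : cabs z <= `|complex.Re z| + `|complex.Im z|.
Proof.
have h0 : 0 <= `|complex.Re z| + `|complex.Im z| by rewrite addr_ge0.
rewrite /cabs -(ger0_norm h0) -sqrtr_sqr ler_sqrt ?sqr_ge0 //.
rewrite sqrrD !real_normK ?num_real // -addrA [X in _ <= _ + X]addrC addrA lerDl.
by rewrite mulrn_wge0 // mulr_ge0.
Qed.

Lemma cabs_normc (z : C) : cabs z = Normc.normc z. Proof. by case: z. Qed.

Lemma cabsD (x y : C) : cabs (x + y) <= cabs x + cabs y.
Proof. rewrite !cabs_normc; exact: le_normcD. Qed.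

Lemma cabsM (x y : C) : cabs (x * y) = cabs x * cabs y.
Proof. rewrite !cabs_normc; exact: Normc.normcM. Qed.

Lemma cabs_sum (I : Type) (s : seq I) (P : pred I) (F : I -> C) :
  cabs (\sum_(i <- s | P i) F i) <= \sum_(i <- s | P i) cabs (F i).
Proof.
elim/big_rec2: _ => [|i y1 y2 _ IH]; first by rewrite /cabs /= expr0n /= addr0 sqrtr0.
exact: le_trans (cabsD _ _) (lerD _ IH).
Qed.

Lemma cabs_real (r : R) : cabs r%:C = `|r|.
Proof. by rewrite /cabs /= expr0n /= addr0 sqrtr_sqr. Qed.

Lemma cabs_i : cabs ('i : C) = 1.
Proof. by rewrite /cabs /= expr0n expr1n add0r sqrtr1. Qed.

Lemma cabs_expi (t : R) : cabs (expi t) = 1.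
Proof. by rewrite /cabs /expi /= cos2Dsin2 sqrtr1. Qed.

Lemma continuous_cabs_sqr (f : R -> C) : continuous (fun y => complex.Re (f y)) ->
  continuous (fun y => complex.Im (f y)) -> continuous (fun y => cabs (f y) ^+ 2).
Proof.
move=> fRe fIm y.
have -> : (fun y => cabs (f y) ^+ 2) =
    (fun y => complex.Re (f y)) \* (fun y => complex.Re (f y)) +
    (fun y => complex.Im (f y)) \* (fun y => complex.Im (f y)).
  by apply/funext => z; rewrite cabs_sqr /= !expr2.
by apply: continuousD; apply: continuousM; [exact: fRe|exact: fRe|exact: fIm|exact: fIm].
Qed.

Definition is_cderive (f : R -> C) (x : R) (df : C) :=
  is_derive x 1 (fun y => complex.Re (f y)) (complex.Re df) /\
  is_derive x 1 (fun y => complex.Im (f y)) (complex.Im df).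

Lemma is_cderive_cderiv f x df : is_cderive f x df -> cderiv f x = df.
Proof.
move=> [fRe fIm]; rewrite /cderiv !derive1E.
by rewrite (@derive_val _ _ _ _ _ _ _ fRe) (@derive_val _ _ _ _ _ _ _ fIm); case: df {fRe fIm}.
Qed.

Lemma is_cderive_cst (c : C) x : is_cderive (fun _ => c) x 0.
Proof. by split; apply: is_derive_eq. Qed.

Lemma is_cderiveD f g x df dg : is_cderive f x df -> is_cderive g x dg ->
  is_cderive (f \+ g) x (df + dg).
Proof.
move=> [fRe fIm] [gRe gIm]; split.
  by under eq_fun do rewrite raddfD; apply: is_derive_eq; rewrite raddfD.
by under eq_fun do rewrite raddfD; apply: is_derive_eq; rewrite raddfD.
Qed.

Lemma is_cderiveM f g x df dg : is_cderive f x df -> is_cderive g x dg ->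
  is_cderive (fun y => f y * g y) x (df * g x + f x * dg).
Proof.
move=> [fRe fIm] [gRe gIm]; split.
  rewrite (_ : (fun y => _) = (fun y => complex.Re (f y) * complex.Re (g y) -
                                         complex.Im (f y) * complex.Im (g y))).
    by apply: is_derive_eq; rewrite [RHS]raddfD /= !Re_mul /GRing.scale /=; ring.
  by apply/funext => y; rewrite Re_mul.
rewrite (_ : (fun y => _) = (fun y => complex.Re (f y) * complex.Im (g y) +
                                       complex.Im (f y) * complex.Re (g y))).
  by apply: is_derive_eq; rewrite [RHS]raddfD /= !Im_mul /GRing.scale /=; ring.
by apply/funext => y; rewrite Im_mul.
Qed.

Lemma is_cderive_sum (I : Type) (s : seq I) (F : I -> R -> C) (dF : I -> C) x :
  (forall i, is_cderive (F i) x (dF i)) ->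
  is_cderive (fun y => \sum_(i <- s) F i y) x (\sum_(i <- s) dF i).
Proof.
move=> FdF; elim: s => [|i s IH].
  by under eq_fun do rewrite big_nil; rewrite big_nil; exact: is_cderive_cst.
by under eq_fun do rewrite big_cons; rewrite big_cons; apply: is_cderiveD.
Qed.

Lemma is_cderive_expi (k x : R) :
  is_cderive (fun y => expi (k * y)) x ((k%:C * 'i) * expi (k * x)).
Proof.
have dk : is_derive x 1 (fun y : R => k * y) k.
  by apply: is_derive_eq; rewrite /GRing.scale /=; ring.
split.
  have := is_derive1_comp (is_derive_cos (k * x)) dk.
  by move=> H; apply: is_derive_eq; rewrite /expi /=; ring.
have := is_derive1_comp (is_derive_sin (k * x)) dk.
by move=> H; apply: is_derive_eq; rewrite /expi /=; ring.
Qed.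

Lemma is_cderive_shift (f df : R -> C) (c x : R) : (forall y, is_cderive f y (df y)) ->
  is_cderive (fun y => f (y - c)) x (df (x - c)).
Proof.
move=> fdf; have ds : is_derive x 1 (fun y : R => y - c) 1.
  by apply: is_derive_eq; rewrite /GRing.scale /=; ring.
have [fRe fIm] := fdf (x - c); split.
  have := @is_derive1_comp _ (fun y => complex.Re (f y)) (fun y => y - c) x _ _ fRe ds.
  by move=> H; apply: is_derive_eq; rewrite mulr1.
have := @is_derive1_comp _ (fun y => complex.Im (f y)) (fun y => y - c) x _ _ fIm ds.
by move=> H; apply: is_derive_eq; rewrite mulr1.
Qed.

Lemma is_cderive_continuous f : (forall y, exists df, is_cderive f y df) ->
  continuous (fun y => complex.Re (f y)) /\ continuous (fun y => complex.Im (f y)).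
Proof.
move=> fdf; split => y; have [df [fRe fIm]] := fdf y.
  by apply: differentiable_continuous; apply/derivable1_diffP; case: fRe.
by apply: differentiable_continuous; apply/derivable1_diffP; case: fIm.
Qed.

Lemma schwartz_is_cderive (f : R -> C) : schwartz f -> forall y, is_cderive f y (cderiv f y).
Proof.
move=> [[fRe _] [fIm _]] y; split.
  by have := fRe 0%N y; rewrite derive1n0 => /derivableP; rewrite -derive1E.
by have := fIm 0%N y; rewrite derive1n0 => /derivableP; rewrite -derive1E.
Qed.

Lemma schwartz_bounded (f : R -> C) : schwartz f ->
  exists2 B, 0 <= B & forall y, cabs (f y) <= B /\ cabs (cderiv f y) <= B.
Proof.
move=> [[_ fRe] [_ fIm]].
have bound0 (g : R -> R) (l : nat) (M : R) :
    (forall x, `|x ^+ 0 * derive1n l g x| <= M) -> forall x, `|derive1n l g x| <= M.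
  by move=> gM x; have := gM x; rewrite expr0 mul1r.
have [M1 /bound0 h1] := fRe 0%N 0%N; have [M2 /bound0 h2] := fRe 0%N 1%N.
have [M3 /bound0 h3] := fIm 0%N 0%N; have [M4 /bound0 h4] := fIm 0%N 1%N.
move: h1 h2 h3 h4; rewrite !derive1n0 !derive1n1 => h1 h2 h3 h4.
have p1 := le_trans (normr_ge0 _) (h1 0); have p2 := le_trans (normr_ge0 _) (h2 0).
have p3 := le_trans (normr_ge0 _) (h3 0); have p4 := le_trans (normr_ge0 _) (h4 0).
exists (M1 + M2 + M3 + M4); first by rewrite !addr_ge0.
move=> y; split; apply: (le_trans (cabs_le_abs_ReIm _)).
  by have := lerD (h1 y) (h3 y); move/le_trans; apply; lra.
by have := lerD (h2 y) (h4 y); move/le_trans; apply; lra.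
Qed.

End ComplexFunctions.

Section SummableSquareSeries.
Variable R : realType.
Variable w : int * int -> R.
Hypothesis w_ge0 : forall p, 0 <= w p.
Hypothesis w_summable : (\esum_(p in [set: int * int]) (w p)%:E < +oo)%E.

Definition wsum N := \sum_(p <- zsquare N) w p.
Definition wtotal := fine (\esum_(p in [set: int * int]) (w p)%:E)%E.
Definition wtail N := limn wsum - wsum N.

Lemma wsum_le_total N : wsum N <= wtotal.
Proof.
have esum_ge0 : (0 <= \esum_(p in [set: int * int]) (w p)%:E)%E.
  by apply: esum_ge0 => p _; rewrite lee_fin.
rewrite -lee_fin /wtotal fineK ?ge0_fin_numE // /wsum -sumEFin.
rewrite (fsbig_seq _ _ (uniq_zsquare N)).
by apply: esum_ge; exists [set` zsquare N] => //; split => //; exact: finite_seq.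
Qed.

Lemma wtotal_ge0 : 0 <= wtotal.
Proof. exact/(le_trans _ (wsum_le_total 0))/sumr_ge0. Qed.

Lemma wsum_nondecreasing : {homo wsum : n m / (n <= m)%N >-> n <= m}.
Proof. by move=> n m nm; rewrite /wsum (big_zsquare_split _ nm) lerDl sumr_ge0. Qed.

Lemma cvgn_wsum : cvgn wsum.
Proof.
apply: nondecreasing_is_cvgn; first exact: wsum_nondecreasing.
by exists wtotal => _ [N _ <-]; exact: wsum_le_total.
Qed.

Lemma wtail_cvg0 : wtail @ \oo --> (0 : R).
Proof. by rewrite -(subrr (limn wsum)); apply: cvgB; [exact: cvg_cst|exact: cvgn_wsum]. Qed.

Lemma wtail_bound N M : (N <= M)%N ->
  \sum_(p <- zsquare M | p \notin zsquare N) w p <= wtail N.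
Proof.
move=> NM; have -> : \sum_(p <- zsquare M | p \notin zsquare N) w p = wsum M - wsum N.
  by rewrite /wsum (big_zsquare_split w NM) addrC addKr.
rewrite lerB //; apply: nondecreasing_cvgn_le; [exact: wsum_nondecreasing|exact: cvgn_wsum].
Qed.

Lemma zsquare_series_cvg (G : int * int -> R[i]) (B : R) :
  0 <= B -> (forall p, cabs (G p) <= B * w p) ->
  let S N := \sum_(p <- zsquare N) G p in
  ccvgn S (climn S) /\
  forall N, `|complex.Re (climn S) - complex.Re (S N)| <= B * wtail N /\
            `|complex.Im (climn S) - complex.Im (S N)| <= B * wtail N.
Proof.
move=> B0 GB S.
have S_cauchy N M : (N <= M)%N -> cabs (S M - S N) <= B * wtail N.
  move=> NM; rewrite /S (big_zsquare_split G NM) addrC addKr.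
  apply: le_trans (cabs_sum _ _ _) _.
  apply: (@le_trans _ _ (\sum_(p <- zsquare M | p \notin zsquare N) B * w p)).
    exact: ler_sum.
  by rewrite -mulr_sumr ler_wpM2l // wtail_bound.
have rate0 : (fun N => B * wtail N) @ \oo --> (0 : R).
  by rewrite -(mulr0 B); apply: cvgMr; exact: wtail_cvg0.
have [cvRe bRe] : cvgn (fun N => complex.Re (S N)) /\
    forall N, `|limn (fun N => complex.Re (S N)) - complex.Re (S N)| <= B * wtail N.
  apply: cvgn_cauchy_rate => // N M NM; rewrite -raddfB.
  exact: le_trans (abs_Re_le_cabs _) (S_cauchy _ _ NM).
have [cvIm bIm] : cvgn (fun N => complex.Im (S N)) /\
    forall N, `|limn (fun N => complex.Im (S N)) - complex.Im (S N)| <= B * wtail N.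
  apply: cvgn_cauchy_rate => // N M NM; rewrite -raddfB.
  exact: le_trans (abs_Im_le_cabs _) (S_cauchy _ _ NM).
by split; [split|move=> N; split].
Qed.

End SummableSquareSeries.

Section CoefficientWeight.
Variables (R : realType) (a : int -> int -> R[i]).

Definition weight (p : int * int) : R :=
  cabs (a p.1 p.2) * (1 + p.1%:~R ^+ 2 + p.2%:~R ^+ 2).

Lemma weight_ge0 p : 0 <= weight p.
Proof. by rewrite mulr_ge0 ?cabs_ge0 // !addr_ge0 // sqr_ge0. Qed.

Lemma rapid_coeff_summable : rapid_coeff a ->
  (\esum_(p in [set: int * int]) (weight p)%:E < +oo)%E.
Proof. by move=> /(_ 1%N); under eq_esum do rewrite expr1. Qed.

Lemma cabs_coeff_le_weight p : cabs (a p.1 p.2) <= weight p.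
Proof. by rewrite -[leLHS]mulr1 ler_wpM2l ?cabs_ge0 //; nra. Qed.

Lemma cabs_coeff_freq_le_weight p : cabs (a p.1 p.2) * `|p.1%:~R : R| <= weight p.
Proof.
rewrite ler_wpM2l ?cabs_ge0 // ler_norml.
by apply/andP; split; nra.
Qed.

Lemma cabs_coeff_transl_le_weight p : cabs (a p.1 p.2) * `|p.2%:~R : R| <= weight p.
Proof.
rewrite ler_wpM2l ?cabs_ge0 // ler_norml.
by apply/andP; split; nra.
Qed.

End CoefficientWeight.

Definition freq {R : realType} (p : int * int) : R := 2 * pi * p.1%:~R.
Definition transl (R : realType) (h : R) (p : int * int) : R := p.2%:~R * h.

Definition opXsD (R : realType) (s : R) (f : R -> R[i]) : R -> R[i] :=
  fun y => cmulx f y + s%:C * cderiv f y.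

Section PiAction.
Variables (R : realType) (h : R) (a : int -> int -> R[i]).
Hypothesis ha : rapid_coeff a.
Notation C := R[i].
Notation w := (weight a).
Notation transl := (transl h).

Let w_summable := rapid_coeff_summable ha.
Let w_ge0 := weight_ge0 a.

Definition piA_term (f : R -> C) p x := a p.1 p.2 * expi (freq p * x) * f (x - transl p).

Lemma piA_zsquare f x :
  piA h a f x = climn (fun N => \sum_(p <- zsquare N) piA_term f p x).
Proof. by rewrite /piA; congr climn; apply/funext => N; rewrite zsqE. Qed.

Lemma cabs_piA_term (f : R -> C) p x (Bf : R) : 0 <= Bf ->
  cabs (f (x - transl p)) <= Bf -> cabs (piA_term f p x) <= Bf * w p.
Proof.
move=> Bf0 fB; rewrite !cabsM cabs_expi mulr1 mulrC.
by apply: ler_pM; rewrite ?cabs_ge0 ?cabs_coeff_le_weight.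
Qed.

Lemma piA_ccvgn (f : R -> C) (Bf : R) : 0 <= Bf -> (forall y, cabs (f y) <= Bf) ->
  forall x, ccvgn (fun N => \sum_(p <- zsquare N) piA_term f p x) (piA h a f x).
Proof.
move=> Bf0 fB x; rewrite piA_zsquare.
by case: (zsquare_series_cvg w_ge0 w_summable Bf0 (fun p => cabs_piA_term Bf0 (fB (x - transl p)))).
Qed.

Variables (xi : R -> C) (B : R).
Hypothesis hxi : schwartz xi.
Hypothesis B0 : 0 <= B.
Hypothesis xiB : forall y, cabs (xi y) <= B /\ cabs (cderiv xi y) <= B.

Let Bd0 : 0 <= (2 * pi + 1) * B.
Proof. by rewrite mulr_ge0 // addr_ge0 // mulr_ge0 // pi_ge0. Qed.

Definition piA_term_deriv p y :=
  a p.1 p.2 * ((freq p)%:C * 'i * expi (freq p * y)) * xi (y - transl p)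
  + a p.1 p.2 * expi (freq p * y) * cderiv xi (y - transl p).

Lemma is_cderive_piA_term p y : is_cderive (piA_term xi p) y (piA_term_deriv p y).
Proof.
have := is_cderiveM (is_cderiveM (is_cderive_cst (a p.1 p.2) y) (is_cderive_expi (freq p) y))
                    (is_cderive_shift (transl p) y (schwartz_is_cderive hxi)).
by rewrite mul0r add0r.
Qed.

Lemma cabs_piA_term_deriv p y : cabs (piA_term_deriv p y) <= ((2 * pi + 1) * B) * w p.
Proof.
have [xiB1 xiB2] := xiB (y - transl p).
have pi0 : 0 <= pi :> R := pi_ge0 R.
apply: le_trans (cabsD _ _) _; rewrite mulrDl mulrDl mul1r.
apply: lerD; last exact: cabs_piA_term.
rewrite !cabsM cabs_real cabs_i cabs_expi !mulr1 /freq !normrM.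
rewrite (ger0_norm pi0) (ger0_norm (ler0n _ 2)).
have -> : cabs (a p.1 p.2) * (2 * pi * `|p.1%:~R|) * cabs (xi (y - transl p)) =
          (2 * pi) * ((cabs (a p.1 p.2) * `|p.1%:~R|) * cabs (xi (y - transl p))) by ring.
rewrite [leRHS](_ : _ = (2 * pi) * (w p * B)); last by ring.
rewrite ler_wpM2l ?mulr_ge0 //.
by apply: ler_pM; rewrite ?mulr_ge0 ?cabs_ge0 ?normr_ge0 ?cabs_coeff_freq_le_weight.
Qed.

Lemma is_cderive_piA x :
  is_cderive (piA h a xi) x (climn (fun N => \sum_(p <- zsquare N) piA_term_deriv p x)).
Proof.
have xi_cvg := piA_ccvgn B0 (fun y => (xiB y).1).
have rate0 : (fun N => (2 * pi + 1) * B * wtail w N) @ \oo --> (0 : R).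
  by rewrite -(mulr0 ((2 * pi + 1) * B)); apply: cvgMr; exact: wtail_cvg0.
have deriv_rate y := (zsquare_series_cvg w_ge0 w_summable Bd0
                       (fun p => cabs_piA_term_deriv p y)).2.
have partial_deriv N y := is_cderive_sum (zsquare N) (fun p => is_cderive_piA_term p y).
split.
- apply: (is_derive_unif_limit
    (F := fun N y => complex.Re (\sum_(p <- zsquare N) piA_term xi p y))
    (DF := fun N y => complex.Re (\sum_(p <- zsquare N) piA_term_deriv p y))
    (f := fun y => complex.Re (piA h a xi y))
    (g := fun y => complex.Re (climn (fun N => \sum_(p <- zsquare N) piA_term_deriv p y)))
    _ _ _ rate0).
  + by move=> N y; case: (partial_deriv N y).
  + by move=> y; case: (xi_cvg y).
  + by move=> N y; case: (deriv_rate y N).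
- apply: (is_derive_unif_limit
    (F := fun N y => complex.Im (\sum_(p <- zsquare N) piA_term xi p y))
    (DF := fun N y => complex.Im (\sum_(p <- zsquare N) piA_term_deriv p y))
    (f := fun y => complex.Im (piA h a xi y))
    (g := fun y => complex.Im (climn (fun N => \sum_(p <- zsquare N) piA_term_deriv p y)))
    _ _ _ rate0).
  + by move=> N y; case: (partial_deriv N y).
  + by move=> y; case: (xi_cvg y).
  + by move=> N y; case: (deriv_rate y N).
Qed.

Definition comm_term (s : R) p y :=
  piA_term xi p y * ((- transl p)%:C - (s * freq p)%:C * 'i).

Lemma cabs_piA_term_opXsD (s x : R) p :
  cabs (piA_term (opXsD s xi) p x) <= ((`|x| + `|h| + `|s|) * B) * w p.
Proof.
rewrite !cabsM cabs_expi mulr1 /opXsD /cmulx.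
have [xiB1 xiB2] := xiB (x - transl p).
have transl_le : `|x - transl p| <= `|x| + `|p.2%:~R : R| * `|h|.
  by rewrite /transl -normrM; apply: ler_normB.
have op_le : cabs ((x - transl p)%:C * xi (x - transl p) + s%:C * cderiv xi (x - transl p))
             <= (`|x| + `|p.2%:~R : R| * `|h| + `|s|) * B.
  apply: le_trans (cabsD _ _) _; rewrite !cabsM !cabs_real mulrDl.
  by apply: lerD; apply: ler_pM; rewrite ?cabs_ge0.
apply: le_trans (ler_wpM2l (cabs_ge0 _) op_le) _.
have ca_le := cabs_coeff_le_weight a p; have cam_le := cabs_coeff_transl_le_weight a p.
set ca := cabs (a p.1 p.2) in ca_le cam_le *; set m := `|p.2%:~R : R| in cam_le *.
rewrite [leLHS](_ : _ = (ca * B) * `|x| + (ca * m) * (`|h| * B) + (ca * B) * `|s|);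
  last by ring.
rewrite [leRHS](_ : _ = (w p * B) * `|x| + w p * (`|h| * B) + (w p * B) * `|s|);
  last by ring.
by rewrite !lerD ?ler_wpM2r ?mulr_ge0.
Qed.

Lemma piA_commutator (s : R) x :
  piA h a (opXsD s xi) x - opXsD s (piA h a xi) x =
  climn (fun N => \sum_(p <- zsquare N) comm_term s p x).
Proof.
have Bx0 : 0 <= (`|x| + `|h| + `|s|) * B by rewrite mulr_ge0 // !addr_ge0.
have c1 : ccvgn (fun N => \sum_(p <- zsquare N) piA_term (opXsD s xi) p x)
                (piA h a (opXsD s xi) x).
  rewrite piA_zsquare.
  by case: (zsquare_series_cvg w_ge0 w_summable Bx0 (cabs_piA_term_opXsD s x)).
have c2 := piA_ccvgn B0 (fun y => (xiB y).1) x.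
have c3 : ccvgn (fun N => \sum_(p <- zsquare N) piA_term_deriv p x) (cderiv (piA h a xi) x).
  rewrite (is_cderive_cderiv (is_cderive_piA x)).
  by case: (zsquare_series_cvg w_ge0 w_summable Bd0 (fun p => cabs_piA_term_deriv p x)).
have := ccvgnB c1 (ccvgnD (ccvgn_realM x c2) (ccvgn_realM s c3)).
rewrite /opXsD /cmulx => c; symmetry; apply: ccvgn_climn; move: c; congr ccvgn.
apply/funext => N /=; rewrite !mulr_sumr -big_split -sumrB /=; apply: eq_bigr => p _.
rewrite /comm_term /piA_term /piA_term_deriv /opXsD /cmulx rmorphB rmorphN rmorphM /=.
ring.
Qed.

End PiAction.

Lemma continuous_translate (R : realType) (g : R -> R) (c : R) :
  continuous g -> continuous (fun y => g (y - c)).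
Proof.
move=> cg y; apply: (@continuous_comp _ _ _ (fun y => y - c) g).
  by apply: continuousB => //; exact: cst_continuous.
exact: cg.
Qed.

Lemma L2sqE (R : realType) (f : R -> R[i]) :
  L2sq f = (\int[lebesgue_measure]_(x in [set: R]) (cabs (f x) ^+ 2)%:E)%E.
Proof. by apply: eq_integral => x _; rewrite cabs_sqr. Qed.

Lemma L2sq_ge0 (R : realType) (f : R -> R[i]) : (0 <= L2sq f)%E.
Proof. by apply: integral_ge0 => y _; rewrite lee_fin addr_ge0 // sqr_ge0. Qed.

Lemma limn_einf_le (R : realType) (u : (\bar R)^nat) (b : \bar R) :
  (forall n, (u n <= b)%E) -> (limn_einf u <= b)%E.
Proof.
move=> ub; rewrite limn_einf_lim; apply: lime_le; first exact: is_cvg_einfs.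
by apply: nearW => n; apply: le_trans (ub n); apply: ereal_inf_lbound; exists n => /=.
Qed.

Section TranslateSeriesL2.
Variables (R : realType) (w t : int * int -> R).
Hypothesis w_ge0 : forall p, 0 <= w p.
Hypothesis w_summable : (\esum_(p in [set: int * int]) (w p)%:E < +oo)%E.
Notation C := R[i].
Variables (xi : R -> C) (B K : R).
Hypothesis B0 : 0 <= B.
Hypothesis xiB : forall y, cabs (xi y) <= B.
Hypothesis xi_cont : continuous (fun y => cabs (xi y) ^+ 2).
Hypothesis K0 : 0 <= K.
Variable sf : int * int -> R -> C.
Hypothesis sfB : forall p y, cabs (sf p y) <= K * w p * cabs (xi (y - t p)).
Hypothesis partial_sum_cont :
  forall N, continuous (fun y => cabs (\sum_(p <- zsquare N) sf p y) ^+ 2).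

Let c := K * wtotal w.
Let partial_sum N y := \sum_(p <- zsquare N) sf p y.

Let c_ge0 : 0 <= c.
Proof. by rewrite mulr_ge0 // wtotal_ge0. Qed.

Let Kw_ge0 p : 0 <= K * w p.
Proof. exact: mulr_ge0. Qed.

Let xi_translate_cont s : continuous (fun y => cabs (xi (y - s)) ^+ 2).
Proof. exact: (@continuous_translate R (fun y => cabs (xi y) ^+ 2) s xi_cont). Qed.

Let xi_translate_scaled_cont (k s : R) :
  continuous (fun y => k * cabs (xi (y - s)) ^+ 2).
Proof.
move=> y; rewrite (_ : (fun y => _) = cst k \* (fun y => cabs (xi (y - s)) ^+ 2)) //.
by apply: continuousM; [exact: cst_continuous|exact: xi_translate_cont].
Qed.

Lemma sum_Kw_le N : \sum_(p <- zsquare N) K * w p <= c.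
Proof. by rewrite -mulr_sumr ler_wpM2l // wsum_le_total. Qed.

(* Cauchy--Schwarz with the weights [K * w p], whose total mass is at most [c]. *)
Lemma cabs_partial_sum_sqr_le N y : cabs (partial_sum N y) ^+ 2 <=
  c * \sum_(p <- zsquare N) (K * w p) * cabs (xi (y - t p)) ^+ 2.
Proof.
have sum_le : cabs (partial_sum N y) <=
    \sum_(p <- zsquare N) K * w p * cabs (xi (y - t p)).
  exact: le_trans (cabs_sum _ _ _) (ler_sum _ (fun p _ => sfB p y)).
apply: le_trans (lerXn2r 2 (cabs_ge0 _) _ sum_le) _.
  by apply: sumr_ge0 => p _; rewrite mulr_ge0 ?cabs_ge0.
apply: le_trans (cauchy_schwarz_weighted _ _ Kw_ge0) _.
by rewrite ler_wpM2r ?sum_Kw_le // sumr_ge0 // => p _; rewrite mulr_ge0 ?sqr_ge0.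
Qed.

Lemma integral_translate_sqr (k s : R) : 0 <= k ->
  (\int[lebesgue_measure]_(y in [set: R]) (k * cabs (xi (y - s)) ^+ 2)%:E
   = k%:E * L2sq xi)%E.
Proof.
move=> k0; under eq_integral do rewrite EFinM.
rewrite ge0_integralZl //.
- by rewrite L2sqE (ge0_integral_shift (G := fun y => cabs (xi y) ^+ 2)) // => y; rewrite sqr_ge0.
- by apply/measurable_EFinP; apply: continuous_measurable_fun; exact: xi_translate_cont.
- by move=> y _; rewrite lee_fin sqr_ge0.
Qed.

Lemma integral_partial_sum_sqr_le N :
  (\int[lebesgue_measure]_(y in [set: R]) (cabs (partial_sum N y) ^+ 2)%:E
   <= (c ^+ 2)%:E * L2sq xi)%E.
Proof.
apply: (@le_trans _ _ (\int[lebesgue_measure]_(y in [set: R])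
    (\sum_(p <- zsquare N) ((c * (K * w p)) * cabs (xi (y - t p)) ^+ 2)%:E))%E).
  apply: ge0_le_integral => //.
  - by move=> y _; rewrite lee_fin sqr_ge0.
  - by apply/measurable_EFinP; apply: continuous_measurable_fun; exact: partial_sum_cont.
  - apply: emeasurable_sum => p; apply/measurable_EFinP.
    apply: continuous_measurable_fun; exact: xi_translate_scaled_cont.
  - move=> y _; rewrite sumEFin lee_fin.
    under eq_bigr do rewrite -mulrA; rewrite -mulr_sumr.
    exact: cabs_partial_sum_sqr_le.
rewrite ge0_integral_sum //; first last.
- by move=> p y _; rewrite lee_fin mulr_ge0 ?sqr_ge0 // mulr_ge0 ?c_ge0.
- move=> p; apply/measurable_EFinP.
  apply: continuous_measurable_fun; exact: xi_translate_scaled_cont.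
rewrite (eq_bigr _ (fun p _ => integral_translate_sqr (t p) (mulr_ge0 c_ge0 (Kw_ge0 p)))).
rewrite -ge0_sume_distrl; last by move=> p _; rewrite lee_fin mulr_ge0 ?c_ge0.
rewrite sumEFin lee_wpmul2r ?L2sq_ge0 // lee_fin -mulr_sumr expr2 ler_wpM2l ?c_ge0 //.
exact: sum_Kw_le.
Qed.

Lemma partial_sum_ccvgn y : ccvgn (partial_sum^~ y) (climn (partial_sum^~ y)).
Proof.
have KB0 : 0 <= K * B by rewrite mulr_ge0.
have sfKB p : cabs (sf p y) <= (K * B) * w p.
  by apply: le_trans (sfB p y) _; rewrite mulrAC ler_wpM2r // ler_wpM2l.
by case: (zsquare_series_cvg w_ge0 w_summable KB0 sfKB).
Qed.

Lemma L2sq_series_le :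
  (L2sq (fun y => climn (partial_sum^~ y)) <= (c ^+ 2)%:E * L2sq xi)%E.
Proof.
set f := fun N y => (cabs (partial_sum N y) ^+ 2)%:E.
have f_cvg y : f^~ y @ \oo --> (cabs (climn (partial_sum^~ y)) ^+ 2)%:E.
  have [Re_cvg Im_cvg] := partial_sum_ccvgn y.
  have sqr_cvg : (fun N => cabs (partial_sum N y) ^+ 2) @ \oo -->
                 cabs (climn (partial_sum^~ y)) ^+ 2.
    under eq_fun do rewrite cabs_sqr !expr2.
    by rewrite cabs_sqr !expr2; apply: cvgD; apply: cvgM.
  by apply: cvg_EFin; [exact: nearW | exact: sqr_cvg].
have lim_einfE y : (cabs (climn (partial_sum^~ y)) ^+ 2)%:E = limn_einf (f^~ y).
  by rewrite is_cvg_limn_einfE ?(cvgP _ (f_cvg y)) // (cvg_lim _ (f_cvg y)).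
rewrite L2sqE; under eq_integral => y _ do rewrite lim_einfE.
apply: le_trans (fatou _ _ _ _) _ => //.
- move=> N; apply/measurable_EFinP; apply: continuous_measurable_fun; exact: (@partial_sum_cont N).
- by move=> N y _; rewrite lee_fin sqr_ge0.
exact/limn_einf_le/integral_partial_sum_sqr_le.
Qed.

End TranslateSeriesL2.

Section CommutatorBound.
Variables (R : realType) (h : R) (a : int -> int -> R[i]).
Hypothesis ha : rapid_coeff a.

Let K : R := `|h| + 2 * pi.

Lemma cabs_comm_term (xi : R -> R[i]) (s : R) : `|s| = 1 -> forall p y,
  cabs (comm_term h a xi s p y) <= K * weight a p * cabs (xi (y - transl h p)).
Proof.
move=> s1 p y; rewrite /comm_term /piA_term !cabsM cabs_expi mulr1.
have factor_le : cabs ((- transl h p)%:C - (s * freq p)%:C * 'i)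
                 <= `|p.2%:~R : R| * `|h| + 2 * pi * `|p.1%:~R : R|.
  apply: le_trans (cabs_le_abs_ReIm _) _.
  rewrite /= !mulr0 !mul0r !subr0 !mulr1 !addr0 !sub0r !normrN !normrM s1 mul1r.
  by rewrite (ger0_norm (pi_ge0 R)) normr_nat.
rewrite mulrAC ler_wpM2r ?cabs_ge0 //.
apply: le_trans (ler_wpM2l (cabs_ge0 _) factor_le) _.
rewrite mulrDr [leRHS](_ : _ = `|h| * weight a p + 2 * pi * weight a p); last by rewrite mulrDl.
apply: lerD.
  by rewrite mulrA [_ * `|h|]mulrC ler_wpM2l ?cabs_coeff_transl_le_weight.
rewrite [leLHS](_ : _ = 2 * pi * (cabs (a p.1 p.2) * `|p.1%:~R|)); last by ring.
by rewrite ler_wpM2l ?mulr_ge0 ?pi_ge0 ?cabs_coeff_freq_le_weight.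
Qed.

Lemma L2sq_commutator_le (xi : R -> R[i]) (s : R) : schwartz xi -> `|s| = 1 ->
  (L2sq (fun x => (piA h a (opXsD s xi) x - opXsD s (piA h a xi) x)%R)
   <= ((K * wtotal (weight a)) ^+ 2)%:E * L2sq xi)%E.
Proof.
move=> hxi s1; have [B B0 xiB] := schwartz_bounded hxi.
have K0 : 0 <= K by rewrite addr_ge0 // mulr_ge0 // pi_ge0.
have xi_cont : continuous (fun y => cabs (xi y) ^+ 2).
  have [] := is_cderive_continuous (fun y => ex_intro _ _ (schwartz_is_cderive hxi y)).
  exact: continuous_cabs_sqr.
have partial_sum_cont N :
    continuous (fun y => cabs (\sum_(p <- zsquare N) comm_term h a xi s p y) ^+ 2).
  have [] := @is_cderive_continuous _ (fun y => \sum_(p <- zsquare N) comm_term h a xi s p y)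
    (fun y => ex_intro _ _ (is_cderive_sum _ (fun p =>
       is_cderiveM (is_cderive_piA_term h a hxi p y) (is_cderive_cst _ y)))).
  exact: continuous_cabs_sqr.
under eq_fun do rewrite (piA_commutator h ha hxi B0 xiB).
exact: (L2sq_series_le (weight_ge0 a) (rapid_coeff_summable ha) B0 (fun y => (xiB y).1)
          xi_cont K0 (cabs_comm_term xi s1) partial_sum_cont).
Qed.

End CommutatorBound.

Lemma opMinusE (R : realType) (f : R -> R[i]) : opMinus f = opXsD (-1) f.
Proof. by apply/funext => y; rewrite /opMinus /opXsD rmorphN1 mulN1r. Qed.

Lemma opPlusE (R : realType) (f : R -> R[i]) : opPlus f = opXsD 1 f.
Proof. by apply/funext => y; rewrite /opPlus /opXsD rmorph1 mul1r. Qed.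

Theorem mainTheorem1 (R : realType) (h : R) (a : int -> int -> R[i]) :
  rapid_coeff a ->
  exists C : R, forall xi1 xi2 : R -> R[i], schwartz xi1 -> schwartz xi2 ->
    (L2sq (fun x => ((piA h a (opMinus xi2) x - opMinus (piA h a xi2) x)%R))
     + L2sq (fun x => ((piA h a (opPlus xi1) x - opPlus (piA h a xi1) x)%R))
     <= C%:E * (L2sq xi1 + L2sq xi2))%E.
Proof.
move=> ha; exists (((`|h| + 2 * pi) * wtotal (weight a)) ^+ 2) => xi1 xi2 s1 s2.
rewrite !opMinusE !opPlusE addeC ge0_muleDr ?L2sq_ge0 //.
apply: leeD.
- exact (L2sq_commutator_le h ha s1 (normr1 R)).
- exact (L2sq_commutator_le h ha s2 (normrN1 R)).
Qed.
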